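(* Let $\mathbb{F}$ be a finite field and $X\subset\mathbb{F}$. Given a decision tree $T$ for $X$, there is a pruned polynomial decision tree $T'$ deciding the same membership with $|T'|\leq 4|T|$.
   Context: A computation tree over $\mathbb{F}$ is a rooted binary tree; the root takes the input $x\in\mathbb{F}$; each computation node $\nu$ computes a value $u_\nu$ by an arithmetic operation (a constant, multiplication by a constant, $+$, $-$, $\times$, or $/$) on values computed at earlier nodes; each decision node tests an equality $u_\mu=u_\lambda$ between previously computed values and has two outgoing edges labeled ''$=$'' and ''$\neq$''. A decision tree for $X$ is a computation tree with leaves labeled ''$\in$''/''$\notin$'' such that input $x$ reaches a leaf labeled ''$\in$'' iff $x\in X$. $|T|$ is the length of the longest path through $T$. For $x\in\mathbb{F}$, $\mathbf{p}_x$ is the path $T$ takes on input $x$. $T$ is pruned if (1) for every decision node $\nu$ there are inputs $x,y$ such that $\mathbf{p}_x,\mathbf{p}_y$ both pass through $\nu$ but take different forks there, and (2) every computation node has at least one decision node as a descendant. $T$ is polynomial if no computation node performs division. *)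

From HB Require Import structures.
From mathcomp Require Import all_boot all_order all_algebra.
Set Implicit Arguments. Unset Strict Implicit. Unset Printing Implicit Defensive.
Import GRing.Theory.
Local Open Scope ring_scope.

Section CTree.
Variable F : fieldType.

(* Computed values along a path are stored in a sequence env; index 0 is the
   input x (the value of the root); index k > 0 is the value computed at the
   k-th computation node on the path from the root. *)
Inductive op : Type :=
  | OConst of F
  | OScale of F & nat
  | OAdd of nat & nat
  | OSub of nat & nat
  | OMul of nat & nat
  | ODiv of nat & nat.

Inductive ctree : Type :=
  | Leaf of bool                        (* true = "in", false = "not in" *)
  | Comp of op & ctree
  | Test of nat & nat & ctree & ctree.  (* decision u_i = u_j; "=" child, "<>" child *)

Definition op_wf (o : op) (n : nat) : Prop :=
  match o with
  | OConst _ => True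
  | OScale _ i => (i < n)%N
  | OAdd i j | OSub i j | OMul i j | ODiv i j => (i < n)%N /\ (j < n)%N
  end.

Fixpoint tree_wf (t : ctree) (n : nat) : Prop :=
  match t with
  | Leaf _ => True
  | Comp o t' => op_wf o n /\ tree_wf t' n.+1
  | Test i j l r => [/\ (i < n)%N, (j < n)%N, tree_wf l n & tree_wf r n]
  end.

Definition val (env : seq F) (i : nat) : F := nth 0 env i.

Definition eval_op (o : op) (env : seq F) : F :=
  match o with
  | OConst c => c
  | OScale c i => c * val env i
  | OAdd i j => val env i + val env j
  | OSub i j => val env i - val env j
  | OMul i j => val env i * val env j
  | ODiv i j => val env i / val env j
  end.

Definition op_safe (o : op) (env : seq F) : Prop :=
  match o with
  | ODiv _ j => val env j != 0
  | _ => True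
  end.

Fixpoint out (t : ctree) (env : seq F) : bool :=
  match t with
  | Leaf b => b
  | Comp o t' => out t' (rcons env (eval_op o env))
  | Test i j l r => if val env i == val env j then out l env else out r env
  end.

(* no division by zero along the path actually taken *)
Fixpoint safe (t : ctree) (env : seq F) : Prop :=
  match t with
  | Leaf _ => True
  | Comp o t' => op_safe o env /\ safe t' (rcons env (eval_op o env))
  | Test i j l r => if val env i == val env j then safe l env else safe r env
  end.

(* |T| : length (number of edges) of the longest root-to-leaf path *)
Fixpoint depth (t : ctree) : nat :=
  match t with
  | Leaf _ => 0
  | Comp _ t' => (depth t').+1
  | Test _ _ l r => (maxn (depth l) (depth r)).+1
  end.

Definition decides (X : pred F) (t : ctree) : Prop :=
  [/\ tree_wf t 1,
      forall x : F, safe t [:: x]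
    & forall x : F, out t [:: x] = X x].

Fixpoint has_decision (t : ctree) : bool :=
  match t with
  | Leaf _ => false
  | Comp _ t' => has_decision t'
  | Test _ _ _ _ => true
  end.

(* A : inputs whose path reaches the current node; env x : values computed
   on input x along the path up to the current node. *)
Fixpoint pruned_rec (t : ctree) (A : F -> Prop) (env : F -> seq F) : Prop :=
  match t with
  | Leaf _ => True
  | Comp o t' =>
      has_decision t' /\
      pruned_rec t' A (fun x => rcons (env x) (eval_op o (env x)))
  | Test i j l r =>
      [/\ exists x y, [/\ A x, A y, val (env x) i = val (env x) j
                          & val (env y) i <> val (env y) j],
          pruned_rec l (fun x => A x /\ val (env x) i = val (env x) j) env
        & pruned_rec r (fun x => A x /\ val (env x) i <> val (env x) j) env]
  end.

Definition pruned (t : ctree) : Prop :=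
  pruned_rec t (fun _ => True) (fun x => [:: x]).

(* "polynomial" tree: no computation node performs division *)
Fixpoint division_free (t : ctree) : Prop :=
  match t with
  | Leaf _ => True
  | Comp (ODiv _ _) _ => False
  | Comp _ t' => division_free t'
  | Test _ _ l r => division_free l /\ division_free r
  end.

End CTree.

(* Every value u computed by T is represented in T' by two computed values p, q
   with u = p / q and q <> 0.  The four field operations act on such fractions by
   division-free formulas (p/q + p'/q' = (p q' + p' q) / (q q'), and so on) costing
   at most four multiplications, additions or subtractions, and a test u = u'
   becomes the test p q' = p' q, costing two multiplications.  The resulting tree
   is then pruned: computation nodes that no longer lead to a test are cut off, and
   a test that does not split the inputs reaching it is replaced by the branch they
   all take, which can only decrease the depth. *)

From mathcomp Require Import all_boot all_order all_algebra.
From mathcomp Require Import zify ring.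
From Stdlib Require Import Classical.
Set Implicit Arguments. Unset Strict Implicit. Unset Printing Implicit Defensive.
Import GRing.Theory.
Local Open Scope ring_scope.

Arguments OConst {F}. Arguments OScale {F}. Arguments OAdd {F}. Arguments OSub {F}.
Arguments OMul {F}. Arguments ODiv {F}. Arguments Leaf {F}.
Arguments val : simpl never.

Section PolynomialTree.
Variable F : fieldType.

Definition comps (s : seq (op F)) (t : ctree F) : ctree F := foldr (@Comp F) t s.

Definition exec (N : seq F) (s : seq (op F)) : seq F :=
  foldl (fun N o => rcons N (eval_op o N)) N s.

Fixpoint ops_wf (s : seq (op F)) (m : nat) : Prop :=
  if s is o :: s' then op_wf o m /\ ops_wf s' m.+1 else True.

Definition div_free_op (o : op F) : bool := if o is ODiv _ _ then false else true.

Lemma out_comps s t N : out (comps s t) N = out t (exec N s).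
Proof. by rewrite /comps; elim: s N => //= o s IH N; rewrite IH. Qed.

Lemma depth_comps s t : depth (comps s t) = (size s + depth t)%N.
Proof. by rewrite /comps; elim: s => //= o s ->. Qed.

Lemma tree_wf_comps s t m :
  ops_wf s m -> tree_wf t (m + size s) -> tree_wf (comps s t) m.
Proof.
rewrite /comps; elim: s m => /= [|o s IH] m; first by rewrite addn0.
by move=> [wf_o wf_s] wf_t; split => //; apply: IH => //; rewrite addSnnS.
Qed.

Lemma division_free_comps s t :
  all div_free_op s -> division_free t -> division_free (comps s t).
Proof. by rewrite /comps; elim: s => //= o s IH /andP[]; case: o => //= *; apply: IH. Qed.

Lemma size_exec N s : size (exec N s) = (size N + size s)%N.
Proof. by elim: s N => /= [|o s IH] N; rewrite ?addn0 // IH size_rcons addSnnS. Qed.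

Lemma val_rcons (N : seq F) x k :
  val (rcons N x) k = if (k < size N)%N then val N k else if k == size N then x else 0.
Proof. by rewrite /val nth_rcons. Qed.

Lemma val_exec N s k : (k < size N)%N -> val (exec N s) k = val N k.
Proof.
elim: s N => //= o s IH N lt_k; rewrite IH ?val_rcons ?lt_k // size_rcons.
exact: ltnW.
Qed.

Definition frac := (nat * nat)%type.

Definition frac_below (m : nat) (r : frac) : bool := (r.1 < m)%N && (r.2 < m)%N.

Definition frac_val (N : seq F) (r : frac) : F := val N r.1 / val N r.2.

Definition represents (R : seq frac) (E N : seq F) : Prop :=
  [/\ size E = size R, all (frac_below (size N)) R &
      forall k, (k < size R)%N ->
        val N (nth (0, 0)%N R k).2 != 0 /\ val E k = frac_val N (nth (0, 0)%N R k)].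

Lemma represents_nth R E N k : represents R E N -> (k < size R)%N ->
  let: (p, q) := nth (0, 0)%N R k in
  [/\ (p < size N)%N, (q < size N)%N, val N q != 0 & val E k = val N p / val N q].
Proof.
move=> [_ /all_nthP below sem] lt_k; have [nz ->] := sem k lt_k.
by have /andP[] := below (0, 0)%N k lt_k; case: nth nz.
Qed.

Definition cross_mul (a b : frac) : seq (op F) := [:: OMul a.1 b.2; OMul b.1 a.2].

Definition compile_op (o : op F) (R : seq frac) (m : nat) : seq (op F) * frac :=
  let r k := nth (0, 0)%N R k in
  match o with
  | OConst c => ([:: OConst c; OConst 1], (m, m.+1))
  | OScale c i => ([:: OScale c (r i).1], (m, (r i).2))
  | OAdd i j => (cross_mul (r i) (r j) ++ [:: OAdd m m.+1; OMul (r i).2 (r j).2], (m.+2, m.+3))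
  | OSub i j => (cross_mul (r i) (r j) ++ [:: OSub m m.+1; OMul (r i).2 (r j).2], (m.+2, m.+3))
  | OMul i j => ([:: OMul (r i).1 (r j).1; OMul (r i).2 (r j).2], (m, m.+1))
  | ODiv i j => ([:: OMul (r i).1 (r j).2; OMul (r i).2 (r j).1], (m, m.+1))
  end.

Lemma size_compile_op o R m : (size (compile_op o R m).1 <= 4)%N.
Proof. by case: o. Qed.

Lemma compile_op_div_free o R m : all div_free_op (compile_op o R m).1.
Proof. by case: o. Qed.

Lemma compile_op_wf o R m : op_wf o (size R) -> all (frac_below m) R ->
  ops_wf (compile_op o R m).1 m /\
  frac_below (m + size (compile_op o R m).1) (compile_op o R m).2.
Proof.
move=> wf_o /all_nthP below; rewrite /frac_below.
case: o wf_o => [c|c i|i j|i j|i j|i j] /=.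
- move=> _; lia.
- by move=> /(below (0, 0)%N); case: nth => p q /andP /= []; lia.
all: move=> [/(below (0, 0)%N) + /(below (0, 0)%N)].
all: case: nth => pi qi; case: nth => pj qj /andP[/= ? ?] /andP[/= ? ?]; lia.
Qed.

Ltac simpl_val :=
  rewrite ?val_rcons ?size_rcons;
  repeat match goal with |- context [if ?c then _ else _] =>
    first [ rewrite (_ : c = true); last by lia
          | rewrite (_ : c = false); last by lia ] end.

Lemma compile_op_correct o R E N : op_wf o (size R) -> op_safe o E -> represents R E N ->
  let: (s, r) := compile_op o R (size N) in
  val (exec N s) r.2 != 0 /\ frac_val (exec N s) r = eval_op o E.
Proof.
move=> + + rep; rewrite /frac_val.
case: o => [c|c i|i j|i j|i j|i j] /=.
- by move=> _ _; rewrite /exec /=; simpl_val; rewrite oner_neq0 divr1.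
- move=> /(represents_nth rep); case: nth => p q [? ? nz ->] _.
  by rewrite /exec /=; simpl_val; split => //; field.
all: move=> [lt_i lt_j]; move: (represents_nth rep lt_i) (represents_nth rep lt_j).
all: case: nth => pi qi; case: nth => pj qj [? ? nzi ->] [? ? nzj ->].
all: rewrite /exec /=; simpl_val.
all: try by move=> _; split; [exact: mulf_neq0 | field; rewrite nzi nzj].
rewrite mulf_eq0 negb_or => /andP[nz_pj _].
by split; [exact: mulf_neq0 | field; rewrite nzi nzj nz_pj].
Qed.

Lemma sub_frac_below m m' R : (m <= m')%N -> all (frac_below m) R -> all (frac_below m') R.
Proof. by move=> le_m; apply: sub_all => -[p q] /andP[/= ? ?]; rewrite /frac_below /=; lia. Qed.

Lemma represents_exec R E N s : represents R E N -> represents R E (exec N s).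
Proof.
move=> [sizeE below sem]; split=> //.
  by apply: sub_frac_below below; rewrite size_exec leq_addr.
move=> k /[dup] lt_k /sem; have /(all_nthP (0, 0)%N)/(_ k lt_k) := below.
by rewrite /frac_val; case: nth => p q /andP[/= lt_p lt_q]; rewrite !val_exec.
Qed.

Lemma represents_rcons R E N r : represents R E N -> frac_below (size N) r ->
  val N r.2 != 0 -> represents (rcons R r) (rcons E (frac_val N r)) N.
Proof.
move=> [sizeE below sem] below_r nz_r; split.
- by rewrite !size_rcons sizeE.
- by rewrite all_rcons below_r.
move=> k; rewrite size_rcons ltnS leq_eqVlt nth_rcons val_rcons sizeE.
by case/orP=> [/eqP ->|lt_k]; rewrite ?ltnn ?eqxx ?lt_k //; apply: sem.
Qed.

Lemma cross_mul_correct R E N i j : represents R E N -> (i < size R)%N -> (j < size R)%N ->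
  let N' := exec N (cross_mul (nth (0, 0)%N R i) (nth (0, 0)%N R j)) in
  (val N' (size N) == val N' (size N).+1) = (val E i == val E j).
Proof.
move=> rep /(represents_nth rep) + /(represents_nth rep).
case: nth => pi qi; case: nth => pj qj [? ? nzi ->] [? ? nzj ->].
by rewrite /exec /=; simpl_val; rewrite eqr_div.
Qed.

Fixpoint compile (t : ctree F) (R : seq frac) (m : nat) : ctree F :=
  match t with
  | Leaf b => Leaf b
  | Comp o t' =>
      let: (s, r) := compile_op o R m in comps s (compile t' (rcons R r) (m + size s))
  | Test i j l r =>
      comps (cross_mul (nth (0, 0)%N R i) (nth (0, 0)%N R j))
            (Test m m.+1 (compile l R m.+2) (compile r R m.+2))
  end.

Lemma compile_wf t R m : tree_wf t (size R) -> all (frac_below m) R ->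
  tree_wf (compile t R m) m.
Proof.
elim: t R m => [b|o t IH|i j l IHl r IHr] R m //=.
- move=> [wf_o wf_t] below; have := compile_op_wf wf_o below.
  case: compile_op => s r /= [wf_s below_r]; apply: tree_wf_comps => //.
  apply: IH; first by rewrite size_rcons.
  by rewrite all_rcons below_r (sub_frac_below _ below) ?leq_addr.
- move=> [lt_i lt_j wf_l wf_r] /[dup] below /(all_nthP (0, 0)%N) below_nth.
  move: (below_nth i lt_i) (below_nth j lt_j).
  have below2 := sub_frac_below (leqnSn m.+1) (sub_frac_below (leqnSn m) below).
  case: nth => pi qi; case: nth => pj qj /andP[/= ? ?] /andP[/= ? ?].
  by do !split; try lia; [exact: IHl | exact: IHr].
Qed.

Lemma compile_div_free t R m : division_free (compile t R m).
Proof.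
elim: t R m => [b|o t IH|i j l IHl r IHr] R m //=.
have := compile_op_div_free o R m; case: compile_op => s r /= div_free_s.
exact: division_free_comps.
Qed.

Lemma depth_compile t R m : (depth (compile t R m) + has_decision t <= 4 * depth t)%N.
Proof.
elim: t R m => [b|o t IH|i j l IHl r IHr] R m //=.
- have := size_compile_op o R m; case: compile_op => s r /= le_s4.
  by rewrite depth_comps; have := IH (rcons R r) (m + size s)%N; lia.
- by have := IHl R m.+2; have := IHr R m.+2; lia.
Qed.

Lemma compile_correct t R E N : tree_wf t (size R) -> represents R E N -> safe t E ->
  out (compile t R (size N)) N = out t E.
Proof.
elim: t R E N => [b|o t IH|i j l IHl r IHr] R E N //.
- move=> /= [wf_o wf_t] rep [safe_o safe_t]; have := compile_op_correct wf_o safe_o rep.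
  have [_ below _] := rep; have := compile_op_wf wf_o below.
  case: compile_op => s r /= [_ below_r] [nz_r val_r].
  rewrite out_comps -(size_exec N s); apply: IH => //; first by rewrite size_rcons.
  by rewrite -val_r; apply: represents_rcons; rewrite ?size_exec //; apply: represents_exec.
- case=> lt_i lt_j wf_l wf_r rep.
  rewrite out_comps -/(compile l R (size N).+2) -/(compile r R (size N).+2).
  have := cross_mul_correct rep lt_i lt_j; set N' := exec N _ => /= cross_N'.
  have sizeN' : size N' = (size N).+2 by rewrite /N' size_exec addn2.
  rewrite /= cross_N' -sizeN'.
  by case: ifP => _ safe_lr; [apply: IHl | apply: IHr] => //; apply: represents_exec.
Qed.

(* Index 1 holds the constant 1, the denominator of the input x; the slack
   [has_decision t] in [depth_compile] pays for this extra node. *)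
Definition polynomial_tree (t : ctree F) : ctree F :=
  if has_decision t then Comp (OConst 1) (compile t [:: (0, 1)%N] 2)
  else Leaf (out t [:: 0]).

Lemma out_no_decision (t : ctree F) e e' : has_decision t = false -> out t e = out t e'.
Proof. by elim: t e e' => //= o t IH e e' /IH; apply. Qed.

Lemma polynomial_tree_wf t : tree_wf t 1 -> tree_wf (polynomial_tree t) 1.
Proof. by rewrite /polynomial_tree; case: ifP => //= _ wf_t; split=> //; apply: compile_wf. Qed.

Lemma polynomial_tree_div_free t : division_free (polynomial_tree t).
Proof. by rewrite /polynomial_tree; case: ifP => //= _; apply: compile_div_free. Qed.

Lemma out_polynomial_tree t x : tree_wf t 1 -> safe t [:: x] ->
  out (polynomial_tree t) [:: x] = out t [:: x].
Proof.
rewrite /polynomial_tree; case: ifP => [_ wf_t safe_t | no_dec _ _] /=; last first.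
  exact: out_no_decision.
apply: (compile_correct (N := [:: x; 1])) => //; split=> // k; rewrite ltnS leqn0 => /eqP ->.
by rewrite /frac_val /val /= oner_neq0 divr1.
Qed.

Lemma depth_polynomial_tree t : (depth (polynomial_tree t) <= 4 * depth t)%N.
Proof.
have := depth_compile t [:: (0, 1)%N] 2.
by rewrite /polynomial_tree; case: ifP => //= _; lia.
Qed.

End PolynomialTree.

Section Pruning.
Variable F : fieldType.

Lemma division_free_Comp (o : op F) t :
  division_free (Comp o t) <-> div_free_op o /\ division_free t.
Proof. by case: o => /= *; split=> [|[]]. Qed.

Lemma safe_division_free (t : ctree F) env : division_free t -> safe t env.
Proof.
elim: t env => [b|o t IH|i j l IHl r IHr] env //=.
- by move=> /division_free_Comp[]; case: o => //= *; split=> //; apply: IH.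
- by move=> [df_l df_r]; case: ifP => _; [apply: IHl | apply: IHr].
Qed.

Lemma test_trichotomy (A P : F -> Prop) :
  [\/ exists x y, [/\ A x, A y, P x & ~ P y],
      forall x, A x -> P x
    | forall x, A x -> ~ P x].
Proof.
case: (classic (exists y, A y /\ ~ P y)) => [[y [Ay nPy]] | noNP]; last first.
  by constructor 2 => z Az; apply: NNPP => nPz; apply: noNP; exists z.
case: (classic (exists x, A x /\ P x)) => [[x [Ax Px]] | noP].
  by constructor 1; exists x, y.
by constructor 3 => z Az Pz; apply: noP; exists z.
Qed.

Lemma exists_pruned (t : ctree F) n (A : F -> Prop) (env : F -> seq F) :
  tree_wf t n -> division_free t ->
  exists t', [/\ tree_wf t' n, division_free t', (depth t' <= depth t)%N,
                 pruned_rec t' A env & forall x, A x -> out t' (env x) = out t (env x)].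
Proof.
elim: t n A env => [b|o t IH|i j l IHl r IHr] n A env.
- by exists (Leaf b).
- move=> /= [wf_o wf_t] /division_free_Comp[df_o df_t].
  have [t' [wf' df' depth' pruned' out']] :=
    IH _ A (fun x => rcons (env x) (eval_op o (env x))) wf_t df_t.
  case: (boolP (has_decision t')) => [dec'|/negbTE no_dec'].
    by exists (Comp o t'); split=> //; apply/division_free_Comp.
  exists (Leaf (out t' [::])); split=> // x Ax /=.
  by rewrite -out' //; apply: out_no_decision.
- move=> [lt_i lt_j wf_l wf_r] [df_l df_r] /=.
  set P := fun x => val (env x) i = val (env x) j.
  case: (test_trichotomy A P) => [split_A | allP | allNP].
  + have [l' [wf_l' df_l' depth_l' pruned_l' out_l']] :=
      IHl _ (fun x => A x /\ P x) env wf_l df_l.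
    have [r' [wf_r' df_r' depth_r' pruned_r' out_r']] :=
      IHr _ (fun x => A x /\ ~ P x) env wf_r df_r.
    exists (Test i j l' r'); split=> //=; first lia.
    by move=> x Ax; case: eqP => Px; [apply: out_l' | apply: out_r'].
  + have [l' [wf_l' df_l' depth_l' pruned_l' out_l']] := IHl _ A env wf_l df_l.
    exists l'; split=> //; first lia.
    by move=> x Ax; rewrite (allP x Ax) eqxx; apply: out_l'.
  + have [r' [wf_r' df_r' depth_r' pruned_r' out_r']] := IHr _ A env wf_r df_r.
    exists r'; split=> //; first lia.
    by move=> x Ax; case: eqP => [/(allNP x Ax)|_] //; apply: out_r'.
Qed.

End Pruning.

Theorem lemma2 (F : finFieldType) (X : {set F}) (T : ctree F) :
  decides (fun x => x \in X) T ->
  exists T' : ctree F,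
    [/\ decides (fun x => x \in X) T', pruned T', division_free T'
      & (depth T' <= 4 * depth T)%N].
Proof.
move=> [wf_T safe_T out_T].
have [T' [wf' df' depth' pruned' out']] :=
  exists_pruned (fun _ => True) (fun x => [:: x])
    (polynomial_tree_wf wf_T) (polynomial_tree_div_free T).
exists T'; split=> //.
- split=> // x; first exact: safe_division_free.
  by rewrite out' // out_polynomial_tree.
- exact: leq_trans depth' (depth_polynomial_tree T).
Qed.
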